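(* Let $\Omega$ be a finite set, let $k \geq 2$ be an integer and let $f \colon \mathbb{N}_0 \to \Omega$ be a sequence. Then the following are equivalent: (1) $f$ is asymptotically $k$-automatic; (2) there exist $d \in \mathbb{N}$, sequences $f_0,f_1,\dots,f_{d-1}\colon \mathbb{N}_0\to\Omega$ and a $k$-automatic map $\phi\colon \Sigma_k^* \to \Sigma_d$ such that for each word $u \in \Sigma_k^*$ of length $\alpha := |u|$ we have $f(k^\alpha n + [u]_k) = f_{\phi(u)}(n)$ for almost all $n \in \mathbb{N}_0$.
   Context: $\mathbb{N}_0=\{0,1,2,\dots\}$, $\mathbb{N}=\{1,2,\dots\}$. For $A\subset\mathbb{N}_0$, $\bar d(A) = \limsup_{N\to\infty} |A\cap\{0,\dots,N-1\}|/N$; a property holds for almost all $n\in\mathbb{N}_0$ if the set of $n$ where it fails has upper density $0$. Sequences $f,g\colon\mathbb{N}_0\to\Omega$ are asymptotically equal, $f\simeq g$, if $f(n)=g(n)$ for almost all $n$. The $k$-kernel of a sequence $f$ is $\mathcal{N}_k(f) = \{ n \mapsto f(k^\alpha n + r) : \alpha, r \in \mathbb{N}_0,\ r < k^\alpha\}$, and $f$ is asymptotically $k$-automatic if $\mathcal{N}_k(f)/{\simeq}$ is finite. $\Sigma_k=\{0,1,\dots,k-1\}$, $\Sigma_k^*$ is the set of all finite words over $\Sigma_k$ (including the empty word), $|u|$ is the length of $u$, and $[u]_k$ is the integer whose base-$k$ expansion (most significant digit first) is $u$ (with $[\text{empty word}]_k=0$). For a map $\phi\colon\Sigma_k^*\to\Omega'$,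 its $k$-kernel is $\{u \mapsto \phi(uv) : v \in \Sigma_k^*\}$ (where $uv$ is concatenation), and $\phi$ is $k$-automatic if this set is finite. *)

From mathcomp Require Import all_boot all_order all_algebra.
Set Implicit Arguments. Unset Strict Implicit. Unset Printing Implicit Defensive.
Import Order.TTheory GRing.Theory Num.Theory.

Definition count_below (A : pred nat) (N : nat) : nat := count A (iota 0 N).

(* upper density of A is 0, i.e. limsup_N |A ∩ [0,N)|/N = 0 (it is >= 0
   trivially), unfolded: for every rational eps > 0, eventually
   |A ∩ [0,N)| <= eps * N. *)
Definition upper_density_zero (A : pred nat) : Prop :=
  forall eps : rat, (0 < eps)%R ->
    exists N0 : nat, forall N : nat, (N0 <= N)%N ->
      ((count_below A N)%:R <= eps * N%:R :> rat)%R.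

Definition almost_all (P : pred nat) : Prop :=
  upper_density_zero [pred n | ~~ P n].

Definition asym_eq (Omega : eqType) (f g : nat -> Omega) : Prop :=
  almost_all [pred n | f n == g n].

Definition kernel_elt (Omega : Type) (k : nat) (f : nat -> Omega)
    (alpha r : nat) : nat -> Omega :=
  fun n => f (k ^ alpha * n + r).

(* N_k(f)/≃ is finite: there are finitely many kernel elements
   (indexed by pairs (alpha, r) with r < k^alpha) such that every kernel
   element is asymptotically equal to one of them. *)
Definition asymptotically_automatic (Omega : eqType) (k : nat)
    (f : nat -> Omega) : Prop :=
  exists s : seq (nat * nat),
    all (fun p => p.2 < k ^ p.1) s /\
    forall alpha r : nat, r < k ^ alpha ->
      exists2 p, p \in s &
        asym_eq (kernel_elt k f alpha r) (kernel_elt k f p.1 p.2).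

(* [u]_k : value of the base-k word u, most significant digit first;
   [empty]_k = 0 *)
Definition word_val (k : nat) (u : seq 'I_k) : nat :=
  foldl (fun acc (d : 'I_k) => acc * k + d) 0 u.

(* phi : Σ_k^* -> Omega' is k-automatic: its k-kernel
   { u |-> phi (u v) : v ∈ Σ_k^* } is a finite set of maps. *)
Definition automatic_map (k : nat) (Omega' : Type)
    (phi : seq 'I_k -> Omega') : Prop :=
  exists V : seq (seq 'I_k),
    forall v : seq 'I_k, exists2 w, w \in V &
      forall u : seq 'I_k, phi (u ++ v) = phi (u ++ w).

(* The k-kernel of f is indexed by words, u |-> f (k^|u| n + [u]_k),
   and the kernel element of uv is that of v composed with the affine map
   n |-> k^|u| n + [u]_k.  Affine maps with positive slope preserve upper
   density zero, so asymptotic equality of kernel elements is a right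
   congruence on words.  If it has finitely many classes, the index of the
   class of u is a k-automatic map phi with f_i the class representatives;
   conversely, finitely many values of phi leave finitely many classes. *)

From mathcomp Require Import all_boot all_order all_algebra.
From mathcomp Require Import ring lra zify boolp.
Set Implicit Arguments. Unset Strict Implicit. Unset Printing Implicit Defensive.
Import Order.TTheory GRing.Theory Num.Theory.

Lemma count_belowS (A : pred nat) N :
  count_below A N.+1 = count_below A N + A N.
Proof. by rewrite /count_below -addn1 iotaD count_cat /= addn0 add0n. Qed.

Lemma count_below_monotone (A : pred nat) : {homo count_below A : M N / M <= N}.
Proof.
by move=> M N /subnKC <-; rewrite /count_below iotaD count_cat leq_addr.
Qed.

Lemma sub_upper_density_zero (A B : pred nat) :
  {subset A <= B} -> upper_density_zero B -> upper_density_zero A.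
Proof.
move=> sAB densB eps eps_gt0; have [N0 HN0] := densB eps eps_gt0.
exists N0 => N /HN0; apply: le_trans; rewrite ler_nat; exact: sub_count.
Qed.

Lemma upper_density_zeroU (A B : pred nat) :
  upper_density_zero A -> upper_density_zero B -> upper_density_zero (predU A B).
Proof.
move=> densA densB eps eps_gt0.
have eps2_gt0 : (0 < eps / 2 :> rat)%R by rewrite divr_gt0.
have [NA HA] := densA _ eps2_gt0; have [NB HB] := densB _ eps2_gt0.
exists (maxn NA NB) => N; rewrite geq_max => /andP[/HA boundA /HB boundB].
have countU : count_below (predU A B) N <= count_below A N + count_below B N.
  by rewrite /count_below -count_predUI leq_addr.
move: countU; rewrite -(ler_nat rat) natrD => countU.
apply: (le_trans countU); lra.
Qed.

Lemma upper_density_zero_affine (B : pred nat) m r : 0 < m ->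
  upper_density_zero B -> upper_density_zero [pred n | B (m * n + r)].
Proof.
move=> m_gt0 densB eps eps_gt0.
have count_affine N :
    count_below [pred n | B (m * n + r)] N <= count_below B (m * N + r).
  elim: N => [|N IH]; first by rewrite /count_below.
  rewrite count_belowS (leq_trans (leq_add IH (leqnn _))) // -count_belowS.
  by apply: count_below_monotone; rewrite mulnS; lia.
have eps'_gt0 : (0 < eps / (2 * m)%:R :> rat)%R by rewrite divr_gt0 // ltr0n; lia.
have [N1 HN1] := densB _ eps'_gt0.
exists (maxn N1 r) => N; rewrite geq_max => /andP[N1_le r_le].
apply: (le_trans _ (le_trans (HN1 (m * N + r) _) _)); first by rewrite ler_nat.
  by nia.
apply: (@le_trans _ _ (eps / (2 * m)%:R * (2 * m * N)%:R)%R).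
  by rewrite ler_wpM2l ?ler_nat ?ltW //; nia.
by rewrite (natrM _ (2 * m) N) mulrA divfK // pnatr_eq0; lia.
Qed.

Section AsymptoticEquality.
Variable Omega : eqType.
Implicit Types g h l : nat -> Omega.

Lemma eq_asym_eq g g' h h' : g =1 g' -> h =1 h' -> asym_eq g h -> asym_eq g' h'.
Proof. by move=> eg eh; apply: sub_upper_density_zero => n; rewrite !inE eg eh. Qed.

Lemma asym_eq_sym g h : asym_eq g h -> asym_eq h g.
Proof. by apply: sub_upper_density_zero => n; rewrite !inE eq_sym. Qed.

Lemma asym_eq_trans g h l : asym_eq g h -> asym_eq h l -> asym_eq g l.
Proof.
move=> egh ehl; apply: sub_upper_density_zero (upper_density_zeroU egh ehl).
by move=> n; rewrite !inE; case: (g n =P h n) => [->|].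
Qed.

Lemma asym_eq_affine g h m r : 0 < m -> asym_eq g h ->
  asym_eq (fun n => g (m * n + r)) (fun n => h (m * n + r)).
Proof. exact: upper_density_zero_affine. Qed.

End AsymptoticEquality.

Lemma foldl_word_val k a (v : seq 'I_k) :
  foldl (fun acc (d : 'I_k) => acc * k + d) a v = a * k ^ size v + word_val v.
Proof.
rewrite /word_val; elim: v a => [|x v IH] a /=; first by rewrite muln1 addn0.
by rewrite (IH (a * k + x)) (IH (0 * k + x)) expnS; ring.
Qed.

Lemma word_val_cat k (u v : seq 'I_k) :
  word_val (u ++ v) = word_val u * k ^ size v + word_val v.
Proof. by rewrite {1}/word_val foldl_cat foldl_word_val. Qed.

Lemma word_val_lt k (u : seq 'I_k) : word_val u < k ^ size u.
Proof.
elim: u => [|x v IH] //.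
rewrite -cat1s word_val_cat {1}/word_val /= expnS.
by have := ltn_ord x; move: IH; nia.
Qed.

Section Digits.
Variables (k : nat) (k_gt0 : 0 < k).

(* The base-k expansion of r mod k^a, padded to length a. *)
Fixpoint digits (a r : nat) : seq 'I_k :=
  if a is a'.+1 then rcons (digits a' (r %/ k)) (Ordinal (ltn_pmod r k_gt0))
  else [::].

Lemma size_digits a r : size (digits a r) = a.
Proof. by elim: a r => [|a IH] r //=; rewrite size_rcons IH. Qed.

Lemma word_val_digits a r : r < k ^ a -> word_val (digits a r) = r.
Proof.
elim: a r => [|a IH] r /=; first by case: r.
move=> r_lt; rewrite -cats1 word_val_cat IH; last by rewrite ltn_divLR -?expnSr.
by rewrite /word_val /= expn1 add0n [r in _ = r](divn_eq r k).
Qed.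

End Digits.

Section WordKernel.
Variables (Omega : eqType) (k : nat) (f : nat -> Omega).

Definition word_kernel (u : seq 'I_k) : nat -> Omega :=
  kernel_elt k f (size u) (word_val u).

Lemma word_kernel_cat u v :
  word_kernel (u ++ v) =1 fun n => word_kernel v (k ^ size u * n + word_val u).
Proof.
by move=> n; rewrite /word_kernel /kernel_elt size_cat word_val_cat expnD; congr f; ring.
Qed.

Hypothesis k_gt0 : 0 < k.

Lemma asym_eq_word_kernel_cat u v w :
  asym_eq (word_kernel v) (word_kernel w) ->
  asym_eq (word_kernel (u ++ v)) (word_kernel (u ++ w)).
Proof.
move=> evw; apply: eq_asym_eq (asym_eq_affine (word_val u) _ evw);
  by [move=> n; rewrite word_kernel_cat | rewrite expn_gt0 k_gt0].
Qed.

Lemma asymptotically_automatic_wordsP :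
  asymptotically_automatic k f <->
  exists s : seq (seq 'I_k), forall u,
    exists2 w, w \in s & asym_eq (word_kernel u) (word_kernel w).
Proof.
pose word_of (p : nat * nat) := digits k_gt0 p.1 p.2.
have kernel_word_of a r : r < k ^ a -> word_kernel (word_of (a, r)) = kernel_elt k f a r.
  by move=> r_lt; rewrite /word_kernel size_digits word_val_digits.
split=> [[s [s_lt covers]] | [s covers]].
- exists (map word_of s) => u.
  have [p ps eup] := covers _ _ (word_val_lt u).
  exists (word_of p); first exact: map_f.
  by case: p ps eup => a r /(allP s_lt) /= /kernel_word_of ->.
- exists [seq (size w, word_val w) | w <- s]; split.
    by apply/allP => _ /mapP[w _ ->]; exact: word_val_lt.
  move=> a r r_lt; have [w ws erw] := covers (word_of (a, r)).
  by exists (size w, word_val w); [exact: map_f | rewrite -kernel_word_of].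
Qed.

End WordKernel.

Lemma classify_by_representatives (T : eqType) (R : T -> T -> Prop)
    (x0 : T) (s : seq T) :
  (forall x y, R x y -> R y x) -> (forall x y z, R x y -> R y z -> R x z) ->
  (forall x, exists2 y, y \in s & R x y) ->
  exists c : T -> 'I_(size s),
    (forall x, R x (nth x0 s (c x))) /\ (forall x y, R x y -> c x = c y).
Proof.
move=> R_sym R_trans covers.
pose related x := fun y => `[< R x y >].
have related_in x : has (related x) s.
  by have [y ys Rxy] := covers x; apply/hasP; exists y => //; apply/asboolP.
have find_lt x : find (related x) s < size s by rewrite -has_find.
exists (fun x => Ordinal (find_lt x)); split=> [x|x y Rxy].
  exact/asboolP/(nth_find x0 (related_in x)).
apply: val_inj; apply: eq_find => z; apply: asbool_equiv_eq.
by split=> [/(R_trans _ _ _ (R_sym _ _ Rxy)) | /(R_trans _ _ _ Rxy)].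
Qed.

Lemma fiber_representatives (T : eqType) (I : finType) (phi : T -> I) :
  exists s : seq T, forall x, exists2 y, y \in s & phi y = phi x.
Proof.
suff [s Hs] : exists s : seq T, forall x, phi x \in enum I ->
    exists2 y, y \in s & phi y = phi x.
  by exists s => x; apply: Hs; rewrite mem_enum.
elim: (enum I) => [|i l [s Hs]]; first by exists [::].
have [[y phiy] | no_fiber] := pselect (exists y, phi y = i).
  exists (y :: s) => x; rewrite inE => /orP[/eqP phix | /Hs[z zs phiz]].
    by exists y; rewrite ?mem_head ?phiy ?phix.
  by exists z; rewrite ?in_cons ?zs ?orbT.
exists s => x; rewrite inE => /orP[/eqP phix | /Hs //].
by case: no_fiber; exists x.
Qed.

Theorem lemma2p3 (Omega : finType) (k : nat) (hk : 2 <= k)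
    (f : nat -> Omega) :
  asymptotically_automatic k f <->
  exists (d : nat) (hd : 0 < d) (F : 'I_d -> nat -> Omega)
         (phi : seq 'I_k -> 'I_d),
    automatic_map phi /\
    forall u : seq 'I_k,
      almost_all [pred n | f (k ^ size u * n + word_val u) == F (phi u) n].
Proof.
have k_gt0 : 0 < k by lia.
rewrite (asymptotically_automatic_wordsP f k_gt0); split=> [[s covers] |].
- have s_gt0 : 0 < size s by have [w ws _] := covers [::]; case: s ws {covers}.
  have [c [c_rep c_class]] := classify_by_representatives
    (R := fun u v => asym_eq (word_kernel f u) (word_kernel f v)) [::]
    (fun _ _ => @asym_eq_sym _ _ _) (fun _ _ _ => @asym_eq_trans _ _ _ _) covers.
  exists (size s), s_gt0, (fun i => word_kernel f (nth [::] s i)), c.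
  split=> [|u]; last exact: c_rep.
  exists s => v; have [w ws evw] := covers v.
  by exists w => // u; apply: c_class; exact: asym_eq_word_kernel_cat.
(* This direction only uses that phi takes finitely many values. *)
- case=> d [_ [F [phi [_ eF]]]]; have [s reps] := fiber_representatives phi.
  exists s => u; have [w ws phiw] := reps u; exists w => //.
  by apply: asym_eq_trans (eF u) _; rewrite -phiw; exact: asym_eq_sym (eF w).
Qed.
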